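(* Let $\lambda = (\lambda_1,\dots,\lambda_r)$ be a partition of $n$ with all $\lambda_i > 0$. For $T \subseteq \{1,\dots,r\}$ let $\lambda^{\downarrow T} = (\lambda_1 - \chi_T(1), \dots, \lambda_r - \chi_T(r))$, where $\chi_T$ is the indicator function of $T$. Then $$f_{\lambda,n-\lambda_1}(q) = \sum_{S \subseteq \{ 2,\dots, r \}} q^{|S| n - \binom{|S| + 1}{2}}\, f_{\lambda^{\downarrow (S \cup \{1 \})},\,n-\lambda_1-|S|}(q),$$ with the convention that $f_{\gamma,i}=0$ whenever $\gamma$ is not a partition (i.e. not weakly decreasing).
   Context: For a partition $\lambda\vdash N$ (trailing zero parts allowed), a standard Young tableau of shape $\lambda$ is a filling of the Ferrers diagram with $1,\dots,N$, increasing along rows and down columns; it has a descent at $m$ if $m+1$ lies in a strictly lower row than $m$; $\mathrm{des}$ is the number of descents and $\mathrm{maj}$ their sum. $f_{\lambda,i}(q)=\sum q^{\mathrm{maj}(\tau)}$ over standard Young tableaux of shape $\lambda$ with $\mathrm{des}(\tau)=i$. *)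

From HB Require Import structures.
From mathcomp Require Import all_boot all_order all_algebra.
Set Implicit Arguments. Unset Strict Implicit. Unset Printing Implicit Defensive.
Import GRing.Theory.

(* A partition is a weakly decreasing sequence of naturals (trailing zeros allowed). *)
Definition is_partition (lam : seq nat) : bool := sorted geq lam.

(* Rows and columns are 0-indexed: cell (i,j) is in row i (row 0 is the top). *)
Definition in_diag (lam : seq nat) (i j : nat) : bool := j < nth 0 lam i.

(* A filling of the Ferrers diagram of lam (N = sumn lam): a finite function on
   'I_(size lam) * 'I_N with values in {0..N}; cells outside the diagram carry 0. *)
Definition filling (lam : seq nat) :=
  {ffun 'I_(size lam) * 'I_(sumn lam) -> 'I_(sumn lam).+1}.

Definition cell (lam : seq nat) := ('I_(size lam) * 'I_(sumn lam))%type.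

Definition is_syt (lam : seq nat) (t : filling lam) : bool :=
  [&& [forall c : cell lam, if in_diag lam (val c.1) (val c.2) then 0 < t c else val (t c) == 0],
      [forall c : cell lam, forall d : cell lam,
         [&& in_diag lam (val c.1) (val c.2), in_diag lam (val d.1) (val d.2) & t c == t d] ==> (c == d)],
      [forall c : cell lam, forall d : cell lam,
         [&& in_diag lam (val d.1) (val d.2), val c.1 == val d.1 & (val c.2).+1 == val d.2]
           ==> (val (t c) < val (t d))] &
      [forall c : cell lam, forall d : cell lam,
         [&& in_diag lam (val d.1) (val d.2), (val c.1).+1 == val d.1 & val c.2 == val d.2]
           ==> (val (t c) < val (t d))]].

Definition rowof (lam : seq nat) (t : filling lam) (m : nat) : nat :=
  if [pick c : cell lam | val (t c) == m] is Some c then val c.1 else 0.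

Definition descent (lam : seq nat) (t : filling lam) (m : nat) : bool :=
  rowof t m < rowof t m.+1.

Definition des (lam : seq nat) (t : filling lam) : nat :=
  \sum_(1 <= m < sumn lam | descent t m) 1.

Definition maj (lam : seq nat) (t : filling lam) : nat :=
  \sum_(1 <= m < sumn lam | descent t m) m.

(* f_{lam,i}(q) as a polynomial in q = 'X with integer coefficients;
   by convention 0 when lam is not a partition. *)
Definition fpoly (lam : seq nat) (i : nat) : {poly int} :=
  (if is_partition lam then
    (\sum_(t : filling lam | is_syt t && (des t == i)) 'X^(maj t))%R
  else 0)%R.

(* lam^{down T}: subtract 1 from the parts with (0-based) index in T. *)
Definition lower (lam : seq nat) (T : pred nat) : seq nat :=
  [seq nth 0 lam i - T i | i <- iota 0 (size lam)].

From HB Require Import structures.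
From mathcomp Require Import all_boot all_order all_algebra.
From mathcomp Require Import zify.
Import GRing.Theory.

(* Reading a standard Young tableau of shape lam |- n as its Yamanouchi word
   (the rows of 1, 2, ..., n) is a bijection onto the lattice words of content
   lam, under which descents of the tableau become ascents of the word.  Every
   ascent ends on a non-zero letter and the word starts with 0, so there are at
   most n - lam_1 ascents, with equality iff the word increases strictly after
   its last 0, i.e. ends with 0 followed by the rows of some S in {2, ..., r} in
   increasing order.  Deleting this tail leaves a lattice word of content
   lam^{down (S + {1})} with |S| fewer ascents, and the deleted ascents sit at
   positions n - |S|, ..., n - 1, whose sum is |S| n - binomial(|S| + 1, 2). *)

Set Implicit Arguments. Unset Strict Implicit. Unset Printing Implicit Defensive.

Fixpoint words (r N : nat) : seq (seq nat) :=
  if N is N'.+1 then [seq x :: w | x <- iota 0 r, w <- words r N'] else [:: [::]].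

Lemma mem_words r N w : (w \in words r N) = (size w == N) && all (fun x => x < r) w.
Proof.
elim: N w => [|N IH] w /=; first by case: w.
apply/allpairsP/idP => [[[x w']] [/= + + ->] | ].
  by rewrite mem_iota IH /= eqSS => -> /andP[-> ->].
case: w => [|x w] //=; rewrite eqSS => /andP[Hs /andP[Hx Ha]].
by exists (x, w); rewrite mem_iota IH Hs Ha Hx.
Qed.

Lemma uniq_words r N : uniq (words r N).
Proof.
elim: N => [|N IH] //=; apply: allpairs_uniq => //; first exact: iota_uniq.
by move=> [x w] [y v] _ _ /= [-> ->].
Qed.

Lemma big_reindex_seq (R : nmodType) (A : finType) (P : pred A) (h : A -> seq nat)
    (L : seq (seq nat)) (Q : pred (seq nat)) (G : seq nat -> R) :
  {in P &, injective h} -> (forall a, P a -> (h a \in L) && Q (h a)) ->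
  (forall w, w \in L -> Q w -> exists2 a, P a & h a = w) -> uniq L ->
  (\sum_(a | P a) G (h a) = \sum_(w <- L | Q w) G w)%R.
Proof.
move=> inj_h hPQ hQP uL.
rewrite -big_filter -(big_map h predT G) -[RHS]big_filter.
apply: perm_big; apply: uniq_perm.
- rewrite map_inj_in_uniq ?filter_uniq ?index_enum_uniq //.
  by move=> a b; rewrite !mem_filter => /andP[Pa _] /andP[Pb _]; apply: inj_h.
- exact: filter_uniq.
move=> w; rewrite mem_filter; apply/mapP/idP.
  by case=> a; rewrite mem_filter => /andP[Pa _] ->; case/andP: (hPQ a Pa) => -> ->.
case/andP=> Qw Lw; case: (hQP w Lw Qw) => a Pa <-; exists a => //.
by rewrite mem_filter Pa mem_index_enum.
Qed.

Lemma sub_in_count (T : eqType) (a b : pred T) (s : seq T) :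
  {in s, forall x, a x -> b x} -> count a s <= count b s.
Proof.
elim: s => [|x s IH] //= sub_ab; apply: leq_add.
  by case: (boolP (a x)) => //= ax; rewrite sub_ab ?mem_head.
by apply: IH => y sy; apply: sub_ab; rewrite inE sy orbT.
Qed.

Lemma count_mem_uniqC (a b : seq nat) : uniq a -> uniq b -> count (mem b) a = count (mem a) b.
Proof.
move=> ua ub; rewrite -!size_filter; apply: perm_size; apply: uniq_perm; rewrite ?filter_uniq //.
by move=> x; rewrite !mem_filter andbC.
Qed.

Lemma leq_count_take (T : eqType) (a : pred T) (w : seq T) k k' :
  k <= k' -> count a (take k w) <= count a (take k' w).
Proof.
move=> le_kk'; rewrite -(take_takel w le_kk') -{2}(cat_take_drop k (take k' w)) count_cat.
exact: leq_addr.
Qed.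

Lemma take_cat_minn (T : Type) (u v : seq T) k : take k u = take (minn k (size u)) (u ++ v).
Proof.
rewrite take_cat; case: (ltnP k (size u)) => hk; first by rewrite hk.
by rewrite ltnn subnn take0 cats0 take_oversize.
Qed.

Lemma mem_take_sorted_ltn (s : seq nat) k x y :
  sorted ltn s -> y \in take k s -> x \in s -> x < y -> x \in take k s.
Proof.
elim: s k => [|a s IH] [|k] //= hs; rewrite !inE => hy hx hxy.
case: (x =P a) => [-> //| nxa]; move: hx; rewrite (introF eqP nxa) /= => hx.
have hpa := order_path_min ltn_trans hs.
case: (y =P a) => [e|nya].
  by move/allP: hpa => /(_ x hx); rewrite -e ltnNge (ltnW hxy).
move: hy; rewrite (introF eqP nya) /= => hy.
exact: (IH k (path_sorted hs) hy hx hxy).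
Qed.

Lemma nth_le_sumn (s : seq nat) i : nth 0 s i <= sumn s.
Proof.
elim: s i => [|x s IH] [|i] //=; first exact: leq_addr.
exact: leq_trans (IH i) (leq_addl _ _).
Qed.

Lemma size_le_sumn s : all (leq 1) s -> size s <= sumn s.
Proof. by elim: s => [|x s IH] //= /andP[hx /IH]; lia. Qed.

Lemma sumn_map_subn (f : nat -> nat) (T : pred nat) s :
  {in s, forall i, T i -> 0 < f i} ->
  sumn [seq f i - T i | i <- s] + count T s = sumn (map f s).
Proof.
elim: s => [|a s IH] //= hpos.
have := IH (fun i si => hpos i (@mem_behead _ (a :: s) _ si)); have := hpos a (mem_head _ _).
by case: (T a) => /= ha; lia.
Qed.

Lemma partition_nthS lam i : is_partition lam -> nth 0 lam i.+1 <= nth 0 lam i.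
Proof.
move=> /(sortedP 0) dec_lam; case: (ltnP i.+1 (size lam)) => hi; first exact: dec_lam.
by rewrite nth_default.
Qed.

Definition entry lam (t : filling lam) (i j : nat) : nat :=
  match insub i : option 'I_(size lam), insub j : option 'I_(sumn lam) with
  | Some a, Some b => val (t (a, b))
  | _, _ => 0 end.

Lemma entryE lam (t : filling lam) (c : cell lam) : entry t c.1 c.2 = t c.
Proof. by case: c => a b; rewrite /entry /= !valK. Qed.

Lemma in_diag_bounds lam i j : in_diag lam i j -> (i < size lam) && (j < sumn lam).
Proof.
rewrite /in_diag => h; apply/andP; split; last exact: leq_trans h (nth_le_sumn _ _).
by case: (ltnP i (size lam)) => // hi; rewrite nth_default in h.
Qed.

Lemma entry_out lam (t : filling lam) i j :
  ~~ ((i < size lam) && (j < sumn lam)) -> entry t i j = 0.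
Proof.
rewrite /entry negb_and => /orP[h|h]; first by rewrite insubN.
by case: (insub i) => // a; rewrite insubN.
Qed.

Lemma entry_cell lam (t : filling lam) i j : (i < size lam) && (j < sumn lam) ->
  exists c : cell lam, [/\ val c.1 = i, val c.2 = j & entry t i j = t c].
Proof. by case/andP=> hi hj; exists (Ordinal hi, Ordinal hj); rewrite -entryE. Qed.

Record syt_array (lam : seq nat) (F : nat -> nat -> nat) : Prop := SytArray {
  syt_range : forall i j, in_diag lam i j -> 0 < F i j <= sumn lam;
  syt_out : forall i j, ~~ in_diag lam i j -> F i j = 0;
  syt_inj : forall i j i' j', in_diag lam i j -> in_diag lam i' j' ->
    F i j = F i' j' -> i = i' /\ j = j';
  syt_row : forall i j, in_diag lam i j.+1 -> F i j < F i j.+1;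
  syt_col : forall i j, in_diag lam i.+1 j -> F i j < F i.+1 j }.

Lemma syt_array_entry lam (t : filling lam) : is_syt t -> syt_array lam (entry t).
Proof.
case/and4P => /forallP H1 /forallP H2 /forallP H3 /forallP H4; split.
- move=> i j h; case: (entry_cell t (in_diag_bounds h)) => c [e1 e2 ->].
  by move: (H1 c); rewrite e1 e2 h => ->; exact: leq_ord.
- move=> i j h; case: (boolP ((i < size lam) && (j < sumn lam))) => [|/entry_out//].
  case/(entry_cell t) => c [e1 e2 ->].
  by move: (H1 c); rewrite e1 e2 (negbTE h) => /eqP.
- move=> i j i' j' h h' e.
  case: (entry_cell t (in_diag_bounds h)) => c [e1 e2 ec].
  case: (entry_cell t (in_diag_bounds h')) => d [f1 f2 ed].
  have etd : t c == t d by rewrite -val_eqE /= -ec -ed e.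
  move: (forallP (H2 c) d); rewrite e1 e2 f1 f2 h h' etd /= => /eqP ecd.
  by subst d; rewrite -e1 -f1 -e2 -f2.
- move=> i j h; have h0 : in_diag lam i j by rewrite /in_diag ltnW.
  case: (entry_cell t (in_diag_bounds h0)) => c [e1 e2 ->].
  case: (entry_cell t (in_diag_bounds h)) => d [f1 f2 ->].
  by move: (forallP (H3 c) d); rewrite e1 e2 f1 f2 h !eqxx.
- move=> i j h; case/andP: (in_diag_bounds h) => hi hj.
  have hr : (i < size lam) && (j < sumn lam) by rewrite hj andbT ltnW.
  case: (entry_cell t hr) => c [e1 e2 ->].
  case: (entry_cell t (in_diag_bounds h)) => d [f1 f2 ->].
  by move: (forallP (H4 c) d); rewrite e1 e2 f1 f2 h !eqxx.
Qed.

Definition filling_of lam (F : nat -> nat -> nat) : filling lam :=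
  [ffun c : cell lam => inord (F (val c.1) (val c.2))].

Section SytArray.

Variables (lam : seq nat) (F : nat -> nat -> nat).
Hypothesis HF : syt_array lam F.

Lemma entry_filling_of i j : entry (filling_of lam F) i j = F i j.
Proof.
case: (boolP ((i < size lam) && (j < sumn lam))) => hr; last first.
  by rewrite entry_out // (syt_out HF) //; apply: contra hr; exact: in_diag_bounds.
case: (entry_cell (filling_of lam F) hr) => c [e1 e2 ->]; rewrite ffunE inordK e1 e2 //.
case: (boolP (in_diag lam i j)) => h; first by case/andP: (syt_range HF h).
by rewrite (syt_out HF).
Qed.

Lemma is_syt_filling_of : is_syt (filling_of lam F).
Proof.
have E (c : cell lam) : nat_of_ord (filling_of lam F c) = F c.1 c.2.
  by rewrite -entry_filling_of entryE.
have E' (c : cell lam) : val (filling_of lam F c) = F c.1 c.2 := E c.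
apply/and4P; split; apply/forallP => c; rewrite ?E ?E'.
- by case: ifP => h; [case/andP: (syt_range HF h) | rewrite (syt_out HF) ?h].
- apply/forallP => d; apply/implyP => /and3P[h1 h2].
  rewrite -val_eqE /= !E' => /eqP /(syt_inj HF h1 h2) [e1 e2].
  by case: c d e1 e2 {h1 h2} => [a b] [a' b'] /= /val_inj -> /val_inj ->.
- apply/forallP => d; apply/implyP => /and3P[h /eqP e1 /eqP e2].
  by rewrite ?E ?E' -e2 -e1 (syt_row HF) // e1 e2.
- apply/forallP => d; apply/implyP => /and3P[h /eqP e1 /eqP e2].
  by rewrite ?E ?E' -e2 -e1 (syt_col HF) // e1 e2.
Qed.

Lemma syt_array_onto m : 0 < m <= sumn lam -> exists i j, in_diag lam i j /\ F i j = m.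
Proof.
move=> hm.
pose D := [seq (i, j) | i <- iota 0 (size lam), j <- iota 0 (nth 0 lam i)].
have HD p : p \in D -> in_diag lam p.1 p.2.
  by case/allpairsPdep => i [j [_ + ->]]; rewrite mem_iota /in_diag.
have uD : uniq D.
  apply: allpairs_uniq_dep => [||[x y] [x' y'] _ _ /= [-> ->]] //; first exact: iota_uniq.
  by move=> i _; exact: iota_uniq.
have sD : size D = sumn lam.
  rewrite size_allpairs_dep (eq_map (fun i => size_iota _ _)).
  by rewrite -/(mkseq _ _) mkseq_nth.
pose vals := [seq F p.1 p.2 | p <- D].
have u_vals : uniq vals.
  rewrite map_inj_in_uniq // => [[a b] [a' b']] ha hb /= e.
  by case: (syt_inj HF (HD _ ha) (HD _ hb) e) => /= -> ->.
have sub : {subset vals <= iota 1 (sumn lam)}.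
  move=> x /mapP [p hp ->]; case/andP: (syt_range HF (HD _ hp)) => h1 h2.
  by rewrite mem_iota h1 add1n ltnS h2.
have le_size : size (iota 1 (sumn lam)) <= size vals by rewrite size_iota size_map sD.
have [_ eq_vals] := uniq_min_size u_vals sub le_size.
have : m \in vals by rewrite eq_vals mem_iota; lia.
by case/mapP => [[i j]] hp ->; exists i, j; split => //; exact: (HD _ hp).
Qed.

Definition row_count i k := count (fun j => F i j <= k) (iota 0 (nth 0 lam i)).

Lemma syt_array_row_mono i j j' : in_diag lam i j' -> j < j' -> F i j < F i j'.
Proof.
elim: j' => [|j' IH] // hd; rewrite ltnS leq_eqVlt => /orP[/eqP -> | hj].
  exact: (syt_row HF).
by apply: ltn_trans (IH _ hj) (syt_row HF hd); rewrite /in_diag ltnW.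
Qed.

Lemma ltn_row_count i j k : in_diag lam i j -> (j < row_count i k) = (F i j <= k).
Proof.
move=> hd; rewrite /row_count.
have E : nth 0 lam i = j.+1 + (nth 0 lam i - j.+1) by rewrite subnKC.
rewrite E iotaD count_cat add0n; case: (leqP (F i j) k) => hk.
  have -> : count (fun j0 => F i j0 <= k) (iota 0 j.+1) = j.+1.
    rewrite -[RHS](size_iota 0 j.+1) -count_predT; apply: eq_in_count => j'.
    rewrite mem_iota /= ltnS => hj'; rewrite leq_eqVlt in hj'.
    case/orP: hj' => [/eqP -> //|hj'].
    by apply: leq_trans hk; apply: ltnW; apply: syt_array_row_mono hd hj'.
  exact: leq_addr.
have -> : count (fun j0 => F i j0 <= k) (iota j.+1 (nth 0 lam i - j.+1)) = 0.
  apply/eqP; rewrite -leqn0 leqNgt -has_count; apply/hasP => [[j']].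
  rewrite mem_iota => /andP[hj1 hj2] /= h.
  have hd' : in_diag lam i j' by rewrite /in_diag E.
  by have := ltn_trans (leq_ltn_trans h hk) (syt_array_row_mono hd' hj1); rewrite ltnn.
rewrite addn0; apply/negbTE; rewrite -leqNgt -addn1 iotaD count_cat /= add0n.
rewrite [F i j <= k]leqNgt hk /= !addn0.
by have := count_size (fun j0 => F i j0 <= k) (iota 0 j); rewrite size_iota.
Qed.

End SytArray.

Lemma rowof_entry lam (t : filling lam) i j :
  syt_array lam (entry t) -> in_diag lam i j -> rowof t (entry t i j) = i.
Proof.
move=> HF h; rewrite /rowof; case: pickP => [c /eqP Hc | H].
  have hc : in_diag lam c.1 c.2.
    apply: contraT => /(syt_out HF); rewrite entryE Hc => e.
    by move: (syt_range HF h); rewrite e.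
  have e : entry t c.1 c.2 = entry t i j by rewrite entryE Hc.
  by case: (syt_inj HF hc h e).
case: (entry_cell t (in_diag_bounds h)) => c [_ _ e].
by move: (H c); rewrite e eqxx.
Qed.

Definition row_word lam (t : filling lam) : seq nat :=
  [seq rowof t m | m <- iota 1 (sumn lam)].

Lemma count_take_row_word lam (t : filling lam) i k : is_syt t ->
  count_mem i (take k (row_word t)) = row_count lam (entry t) i k.
Proof.
move=> /syt_array_entry HF.
rewrite /row_word -map_take take_iota count_map.
set K := minn k (sumn lam).
pose Ri := [seq entry t i j | j <- iota 0 (nth 0 lam i)].
have uRi : uniq Ri.
  rewrite map_inj_in_uniq ?iota_uniq // => j j'; rewrite !mem_iota /= => hj hj' e.
  by case: (syt_inj HF hj hj' e).
transitivity (count (mem Ri) (iota 1 K)).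
  apply: eq_in_count => m; rewrite mem_iota => hm.
  have hm' : 0 < m <= sumn lam by move: hm; rewrite /K; lia.
  case: (syt_array_onto HF hm') => i' [j' [hd <-]].
  rewrite /= (rowof_entry HF hd); apply/eqP/idP => [ei|/mapP[j'' + e]].
    by subst i'; apply/mapP; exists j' => //; rewrite mem_iota.
  by rewrite mem_iota => hj; case: (syt_inj HF hd hj e).
rewrite count_mem_uniqC ?iota_uniq // count_map /row_count; apply: eq_in_count => j.
rewrite mem_iota /= => hj; have := syt_range HF hj; rewrite mem_iota /K.
by move: (entry t i j) => v /andP[h1 h2]; rewrite h1 add1n ltnS leq_min h2 andbT.
Qed.

Definition yamanouchi lam (w : seq nat) : bool :=
  [&& size w == sumn lam, all (fun x => x < size lam) w,
      all (fun i => count_mem i w == nth 0 lam i) (iota 0 (size lam)) &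
      all (fun k => all (fun i => count_mem i.+1 (take k w) <= count_mem i (take k w))
                         (iota 0 (size lam))) (iota 0 (size w).+1)].

Lemma yamanouchiP lam w : reflect
  [/\ size w = sumn lam, forall x, x \in w -> x < size lam,
      forall i, count_mem i w = nth 0 lam i &
      forall k i, i < size lam -> count_mem i.+1 (take k w) <= count_mem i (take k w)]
  (yamanouchi lam w).
Proof.
apply: (iffP and4P) => [[/eqP h1 /allP h2 /allP h3 /allP h4] | [h1 h2 h3 h4]]; split.
- exact h1.
- exact h2.
- move=> i; case: (ltnP i (size lam)) => hi; first by apply/eqP/h3; rewrite mem_iota.
  rewrite nth_default //; apply/count_memPn/negP => /h2; by rewrite ltnNge hi.
- move=> k i hi; have [hk|hk] := leqP k (size w).
    have hk' : k \in iota 0 (size w).+1 by rewrite mem_iota.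
    by have /allP := h4 k hk'; apply; rewrite mem_iota.
  rewrite take_oversize ?(ltnW hk) //.
  have hk' : size w \in iota 0 (size w).+1 by rewrite mem_iota add0n ltnSn.
  by have /allP := h4 (size w) hk'; rewrite take_size; apply; rewrite mem_iota.
- by rewrite h1.
- exact/allP.
- by apply/allP => i _; rewrite h3.
- by apply/allP => k _; apply/allP => i; rewrite mem_iota => /= hi; apply: h4.
Qed.

Lemma mem_words_yamanouchi lam w : yamanouchi lam w -> w \in words (size lam) (sumn lam).
Proof. by case/yamanouchiP => hs ha _ _; rewrite mem_words hs eqxx; apply/allP. Qed.

Lemma yamanouchi_partition lam w : yamanouchi lam w -> is_partition lam.
Proof.
case/yamanouchiP => _ _ hc hb; apply/(sortedP 0) => i hi.
by rewrite /= -!hc; have := hb (size w) i (ltnW hi); rewrite take_size.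
Qed.

Lemma row_word_yamanouchi lam (t : filling lam) :
  is_partition lam -> is_syt t -> yamanouchi lam (row_word t).
Proof.
move=> hp ht; have HF := syt_array_entry ht.
apply/yamanouchiP; split.
- by rewrite size_map size_iota.
- move=> x /mapP [m]; rewrite mem_iota add1n ltnS => hm ->.
  case: (syt_array_onto HF hm) => i [j [hd <-]]; rewrite (rowof_entry HF hd).
  by case/andP: (in_diag_bounds hd).
- move=> i; rewrite -[row_word t](@take_oversize _ (sumn lam)) ?size_map ?size_iota //.
  rewrite count_take_row_word // -[RHS](size_iota 0) -count_predT.
  by apply: eq_in_count => j; rewrite mem_iota /= => /(syt_range HF)/andP[].
- move=> k i hi; rewrite !count_take_row_word // /row_count.
  have hl := partition_nthS i hp.
  apply: (@leq_trans (count (fun j => entry t i j <= k) (iota 0 (nth 0 lam i.+1)))).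
    apply: sub_in_count => j; rewrite mem_iota /= => /(syt_col HF) hj.
    exact/leq_trans/ltnW.
  by rewrite -(subnKC hl) iotaD count_cat leq_addr.
Qed.

(* One plus the position of the [j]-th occurrence (counting from 0) of [i] in [w]. *)
Definition occurrence (w : seq nat) i j :=
  find (fun k => j < count_mem i (take k w)) (iota 0 (size w).+1).

Lemma occurrence_leqE w i j : j < count_mem i w ->
  forall k, (occurrence w i j <= k) = (j < count_mem i (take k w)).
Proof.
move=> hj k; set p := fun k => j < count_mem i (take k w).
have hs : has p (iota 0 (size w).+1).
  by apply/hasP; exists (size w); rewrite ?mem_iota ?add0n ?ltnSn // /p take_size.
have ho : occurrence w i j < (size w).+1 by rewrite -[X in _ < X](size_iota 0) -has_find.
have po : p (occurrence w i j) by have := nth_find 0 hs; rewrite nth_iota // add0n.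
case: (leqP (occurrence w i j) k) => hk.
  by apply/esym; apply: leq_trans po _; apply: leq_count_take.
apply/esym/negbTE; case: (ltnP k (size w).+1) => hk'.
  by have := before_find 0 hk; rewrite nth_iota // add0n => ->.
by move: hk; rewrite ltnNge (ltnW (leq_trans ho hk')).
Qed.

Lemma occurrence_nth w p : p < size w ->
  occurrence w (nth 0 w p) (count_mem (nth 0 w p) (take p w)) = p.+1.
Proof.
move=> hp; set i := nth 0 w p; set j := count_mem i (take p w).
have e1 : count_mem i (take p.+1 w) = j.+1.
  by rewrite (take_nth 0 hp) -cats1 count_cat /= /i eqxx addn1.
have hj : j < count_mem i w.
  by rewrite -e1 -{2}(cat_take_drop p.+1 w) count_cat leq_addr.
apply/eqP; rewrite eqn_leq (occurrence_leqE hj) e1 ltnSn /=.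
by rewrite ltnNge (occurrence_leqE hj) ltnn.
Qed.

Lemma occurrenceP w i j : j < count_mem i w ->
  [/\ 0 < occurrence w i j <= size w, nth 0 w (occurrence w i j).-1 = i &
      count_mem i (take (occurrence w i j).-1 w) = j].
Proof.
move=> hj; have P0 := occurrence_leqE hj 0; rewrite take0 /= ltn0 in P0.
have Psz := occurrence_leqE hj (size w); rewrite take_size hj in Psz.
have hpos : 0 < occurrence w i j by rewrite ltnNge P0.
set o := occurrence w i j in hpos P0 Psz *.
have ho : o.-1 < size w by rewrite prednK.
have Pprev := occurrence_leqE hj o.-1; rewrite -[o in o <= _](prednK hpos) ltnn in Pprev.
have := occurrence_leqE hj o; rewrite leqnn -{1}(prednK hpos) (take_nth 0 ho).
rewrite -cats1 count_cat /= addn0.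
move/esym/negbT: Pprev; rewrite -leqNgt => Pprev.
case: eqP => [e | _]; last by rewrite addn0 ltnNge Pprev.
rewrite addn1 ltnS => h; split => //; first by rewrite hpos Psz.
by apply/eqP; rewrite eqn_leq -h Pprev.
Qed.

Lemma row_word_inj lam (t1 t2 : filling lam) :
  is_syt t1 -> is_syt t2 -> row_word t1 = row_word t2 -> t1 = t2.
Proof.
move=> h1 h2 e; have HF1 := syt_array_entry h1; have HF2 := syt_array_entry h2.
have E i j : entry t1 i j = entry t2 i j.
  have [hd|hd] := boolP (in_diag lam i j); last by rewrite (syt_out HF1) // (syt_out HF2).
  have K k : (entry t1 i j <= k) = (entry t2 i j <= k).
    by rewrite -(ltn_row_count HF1 _ hd) -(ltn_row_count HF2 _ hd) -!count_take_row_word // e.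
  by apply/eqP; rewrite eqn_leq K leqnn -K leqnn.
by apply/ffunP => c; apply: val_inj; have := E c.1 c.2; rewrite !entryE.
Qed.

(* The inverse of [row_word]: the cell (i, j) receives the position of the
   (j+1)-st letter [i]. *)
Definition occurrence_array lam (w : seq nat) i j :=
  if in_diag lam i j then occurrence w i j else 0.

Lemma syt_array_occurrence lam w : yamanouchi lam w -> syt_array lam (occurrence_array lam w).
Proof.
case/yamanouchiP => hs _ hc hb; rewrite /occurrence_array.
have hdc i j : in_diag lam i j -> j < count_mem i w by rewrite hc.
split.
- move=> i j hd; rewrite hd -hs; by case: (occurrenceP (hdc _ _ hd)).
- by move=> i j hd; rewrite (negbTE hd).
- move=> i j i' j' hd hd'; rewrite hd hd' => e.
  case: (occurrenceP (hdc _ _ hd)) => _ e1 e2; case: (occurrenceP (hdc _ _ hd')) => _ e1' e2'.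
  have ei : i = i' by rewrite -e1 -e1' e.
  by subst i'; split => //; rewrite -e2 -e2' e.
- move=> i j hd; have hd0 : in_diag lam i j by rewrite /in_diag ltnW.
  rewrite hd hd0; case: (occurrenceP (hdc _ _ hd)) => /andP[hp _] _ e2.
  have : occurrence w i j <= (occurrence w i j.+1).-1.
    by rewrite (occurrence_leqE (hdc _ _ hd0)) e2.
  by rewrite -ltnS prednK.
- move=> i j hd; rewrite hd; have [hd0|hd0] := boolP (in_diag lam i j); last first.
    by case: (occurrenceP (hdc _ _ hd)) => /andP[].
  case: (occurrenceP (hdc _ _ hd)) => /andP[hp hle] e1 e2.
  have hi : i < size lam by case/andP: (in_diag_bounds hd) => /ltnW.
  have hv : j < count_mem i (take (occurrence w i.+1 j) w).
    apply: leq_trans (hb _ _ hi).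
    have ho : (occurrence w i.+1 j).-1 < size w by rewrite prednK.
    by rewrite -(prednK hp) (take_nth 0 ho) -cats1 count_cat /= e1 eqxx e2 addn1.
  rewrite ltn_neqAle (occurrence_leqE (hdc _ _ hd0)) hv andbT.
  apply/negP => /eqP e; case: (occurrenceP (hdc _ _ hd0)) => _ f1 _.
  by move: f1; rewrite e e1 => /esym/n_Sn.
Qed.

Lemma yamanouchi_row_word lam w :
  yamanouchi lam w -> exists2 t : filling lam, is_syt t & row_word t = w.
Proof.
move=> hy; have HF := syt_array_occurrence hy; case/yamanouchiP: hy => hs _ hc _.
exists (filling_of lam (occurrence_array lam w)); first exact: is_syt_filling_of.
have HT := syt_array_entry (is_syt_filling_of HF).
apply: (@eq_from_nth _ 0); first by rewrite size_map size_iota hs.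
rewrite size_map size_iota => p hp.
rewrite (nth_map 0) ?size_iota // nth_iota // add1n.
have hp' : p < size w by rewrite hs.
set i := nth 0 w p; set j := count_mem i (take p w).
have e1 : count_mem i (take p.+1 w) = j.+1.
  by rewrite (take_nth 0 hp') -cats1 count_cat /= /i eqxx addn1.
have hd : in_diag lam i j.
  by rewrite /in_diag -hc -e1 -{2}(cat_take_drop p.+1 w) count_cat leq_addr.
have ev : entry (filling_of lam (occurrence_array lam w)) i j = p.+1.
  by rewrite entry_filling_of // /occurrence_array hd occurrence_nth.
by rewrite -ev (rowof_entry HT hd).
Qed.

Fixpoint asc (x : nat) (w : seq nat) : nat :=
  if w is y :: w' then (x < y) + asc y w' else 0.

(* The sum of the positions of the ascents of [x :: w], that of [x] being [k]. *)
Fixpoint asc_maj (k x : nat) (w : seq nat) : nat :=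
  if w is y :: w' then (if x < y then k else 0) + asc_maj k.+1 y w' else 0.

Definition word_des (w : seq nat) := if w is x :: w' then asc x w' else 0.
Definition word_maj (w : seq nat) := if w is x :: w' then asc_maj 1 x w' else 0.

Lemma sum_ascents (f : nat -> nat) a n :
  \sum_(a <= m < a + n | f m < f m.+1) 1 = asc (f a) (map f (iota a.+1 n)).
Proof.
elim: n a => [|n IH] a; first by rewrite addn0 big_geq.
rewrite big_ltn_cond ?addnS ?ltnS ?leq_addr // -addSn IH /=.
by case: (f a < f a.+1).
Qed.

Lemma sum_ascent_positions (f : nat -> nat) a n :
  \sum_(a <= m < a + n | f m < f m.+1) m = asc_maj a (f a) (map f (iota a.+1 n)).
Proof.
elim: n a => [|n IH] a; first by rewrite addn0 big_geq.
rewrite big_ltn_cond ?addnS ?ltnS ?leq_addr // -addSn IH /=.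
by case: (f a < f a.+1).
Qed.

Lemma des_row_word lam (t : filling lam) : des t = word_des (row_word t).
Proof.
rewrite /des /row_word; case: (sumn lam) => [|n]; first by rewrite big_geq.
by rewrite -add1n sum_ascents.
Qed.

Lemma maj_row_word lam (t : filling lam) : maj t = word_maj (row_word t).
Proof.
rewrite /maj /row_word; case: (sumn lam) => [|n]; first by rewrite big_geq.
by rewrite -add1n sum_ascent_positions.
Qed.

Lemma sum_syt_row_word lam (G : seq nat -> {poly int}) : is_partition lam ->
  (\sum_(t : filling lam | is_syt t) G (row_word t) =
   \sum_(w <- words (size lam) (sumn lam) | yamanouchi lam w) G w)%R.
Proof.
move=> hp; apply: big_reindex_seq (uniq_words _ _).
- by move=> t1 t2 h1 h2; exact: row_word_inj.
- move=> t ht; have hy := row_word_yamanouchi hp ht.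
  by rewrite hy andbT mem_words_yamanouchi.
- by move=> w _ /yamanouchi_row_word[t ht <-]; exists t.
Qed.

Definition word_fpoly lam i : {poly int} :=
  (\sum_(w <- words (size lam) (sumn lam) | yamanouchi lam w && (word_des w == i))
     'X^(word_maj w))%R.

Lemma fpoly_word lam i : fpoly lam i = word_fpoly lam i.
Proof.
rewrite /fpoly /word_fpoly; case: ifP => hp; last first.
  rewrite big_seq_cond big1 // => w /andP[_ /andP[/yamanouchi_partition hw _]].
  by rewrite hw in hp.
rewrite big_mkcondr [RHS]big_mkcondr.
under eq_bigr => t _ do rewrite des_row_word maj_row_word.
exact: (sum_syt_row_word (fun w => if word_des w == i then 'X^(word_maj w) else 0)%R).
Qed.

(* [suffix0 w] is the suffix of [w] starting at its last letter 0, and [prefix0 w]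
   what precedes it (when [w] has no 0 these are [w] and [[::]]). *)
Fixpoint suffix0 (w : seq nat) : seq nat :=
  if w is x :: w' then (if 0 \in w' then suffix0 w' else w) else [::].

Fixpoint prefix0 (w : seq nat) : seq nat :=
  if w is x :: w' then (if 0 \in w' then x :: prefix0 w' else [::]) else [::].

Lemma cat_prefix0_suffix0 w : prefix0 w ++ suffix0 w = w.
Proof. by elim: w => [|x w IH] //=; case: ifP => _ //=; rewrite IH. Qed.

Lemma prefix0_suffix0_cat u v :
  0 \notin v -> prefix0 (u ++ 0 :: v) = u /\ suffix0 (u ++ 0 :: v) = 0 :: v.
Proof.
move=> hv; elim: u => [|x u [IH1 IH2]] /=; first by rewrite (negbTE hv).
by rewrite mem_cat inE eqxx orbT IH1 IH2.
Qed.

Lemma suffix0_shape w : 0 \in w -> exists2 v, suffix0 w = 0 :: v & 0 \notin v.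
Proof.
elim: w => [|x w IH] //=; case: ifP => [h _|h]; first exact: IH.
by rewrite inE => /orP[/eqP <-|]; [exists w; rewrite ?h | rewrite h].
Qed.

(* Every ascent ends on a non-zero letter. *)
Lemma leq_asc_count0 x w : asc x w + count_mem 0 w <= size w.
Proof.
elim: w x => [|y w IH] x //=.
by have := IH y; case: (ltnP x y) => h; case: eqP => e /=; lia.
Qed.

(* In the equality case every non-zero letter is an ascent, so the word
   increases strictly after its last 0. *)
Lemma sorted_suffix0 x w : asc x w + count_mem 0 w = size w -> sorted ltn (suffix0 (x :: w)).
Proof.
elim: w x => [|y w IH] x //= E.
have h1 := leq_asc_count0 y w.
have /IH IHy : asc y w + count_mem 0 w = size w.
  by move: E h1; case: (ltnP x y) => h; case: (y =P 0) => e /=; lia.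
rewrite inE; case: eqP => [e|ne] /=; first by move: IHy; rewrite /= -e.
case: ifP => hw; move: IHy; rewrite /= hw //= => ->; rewrite andbT.
by move: E h1; case: (ltnP x y) => h; case: eqP => e //=; lia.
Qed.

Lemma asc_cat x u v : asc x (u ++ v) = asc x u + asc (last x u) v.
Proof. by elim: u x => [|y u IH] x //=; rewrite IH addnA. Qed.

Lemma asc_maj_cat k x u v :
  asc_maj k x (u ++ v) = asc_maj k x u + asc_maj (k + size u) (last x u) v.
Proof. by elim: u k x => [|y u IH] k x /=; rewrite ?addn0 // IH addnA addSnnS. Qed.

Lemma asc_path x v : path ltn x v -> asc x v = size v.
Proof. by elim: v x => [|y v IH] x //= /andP[-> /IH ->]. Qed.

Lemma asc_maj_path k x v : path ltn x v -> asc_maj k x v = \sum_(j < size v) (k + j).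
Proof.
elim: v k x => [|y v IH] k x /=; first by rewrite big_ord0.
case/andP=> -> /IH ->; rewrite big_ord_recl /= addn0; congr (_ + _).
by apply: eq_bigr => j _; rewrite /bump /= add1n addSnnS.
Qed.

Lemma word_des_cat_path u v : path ltn 0 v -> word_des (u ++ 0 :: v) = word_des u + size v.
Proof.
move=> h; case: u => [|x u] /=; first exact: asc_path.
by rewrite asc_cat /= add0n (asc_path h).
Qed.

Lemma word_maj_cat_path u v : path ltn 0 v ->
  word_maj (u ++ 0 :: v) = word_maj u + \sum_(j < size v) ((size u).+1 + j).
Proof.
move=> h; case: u => [|x u] /=; first by rewrite asc_maj_path.
by rewrite asc_maj_cat /= add0n (asc_maj_path _ h) add1n.
Qed.

Lemma sum_consecutive a s : \sum_(j < s) (a.+1 + j) = s * (a.+1 + s) - 'C(s.+1, 2).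
Proof.
suff: \sum_(j < s) (a.+1 + j) + 'C(s.+1, 2) = s * (a.+1 + s) by lia.
elim: s => [|s IH]; first by rewrite big_ord0.
rewrite big_ord_recr /= binS bin1.
by move: IH; set S := \sum_(_ < _) _; set C := 'C(_, _); lia.
Qed.

Lemma nth_lower lam T i : nth 0 (lower lam T) i = nth 0 lam i - T i.
Proof.
rewrite /lower; case: (ltnP i (size lam)) => hi.
  by rewrite (nth_map 0) ?size_iota // nth_iota.
by rewrite !nth_default ?size_map ?size_iota.
Qed.

Lemma size_lower lam T : size (lower lam T) = size lam.
Proof. by rewrite size_map size_iota. Qed.

Lemma sumn_lower lam (T : pred nat) :
  (forall i, i < size lam -> T i -> 0 < nth 0 lam i) ->
  sumn (lower lam T) + count T (iota 0 (size lam)) = sumn lam.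
Proof.
move=> hpos; rewrite /lower sumn_map_subn; first by rewrite -/(mkseq _ _) mkseq_nth.
by move=> i; rewrite mem_iota => /andP[_ /hpos].
Qed.

Definition in_set_nat r (S : {set 'I_r}) (i : nat) : bool := [exists x in S, val x == i].
Definition lowered r (S : {set 'I_r}) (i : nat) : bool := (i == 0) || in_set_nat S i.

Definition run r (S : {set 'I_r}) : seq nat := [seq i <- iota 1 r.-1 | in_set_nat S i].

Definition final_run_set r (w : seq nat) : {set 'I_r} :=
  [set i : 'I_r | val i \in behead (suffix0 w)].

Lemma in_set_nat_lt r (S : {set 'I_r}) i : in_set_nat S i -> i < r.
Proof. by case/existsP => x /andP[_ /eqP <-]; exact: ltn_ord. Qed.

Lemma in_set_natE r (S : {set 'I_r}) (x : 'I_r) : in_set_nat S x = (x \in S).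
Proof.
apply/existsP/idP => [[y /andP[hy /eqP /val_inj <-]] // | hx].
by exists x; rewrite hx eqxx.
Qed.

Lemma filter_lowered r (S : {set 'I_r}) : 0 < r ->
  [seq i <- iota 0 r | lowered S i] = 0 :: run S.
Proof.
case: r S => [|r] S // _; rewrite /= /run /=; congr (_ :: _).
by apply: eq_in_filter => -[|i]; rewrite mem_iota.
Qed.

Lemma path_run r (S : {set 'I_r}) : 0 < r -> path ltn 0 (run S).
Proof.
move=> hr; have := sorted_filter ltn_trans (lowered S) (iota_ltn_sorted 0 r).
by rewrite filter_lowered.
Qed.

Lemma mem_run r (S : {set 'I_r}) i : (i \in run S) = (0 < i) && in_set_nat S i.
Proof.
rewrite mem_filter mem_iota andbC; case hi: (in_set_nat S i); rewrite ?andbF ?andbT //.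
have := in_set_nat_lt hi; case: r S hi => // r S _ hir /=.
by rewrite add1n ltnS andbC -ltnS hir.
Qed.

Lemma size_run r (S : {set 'I_r}) : [forall i in S, 0 < val i] -> size (run S) = #|S|.
Proof.
move=> /forall_inP S_pos.
have S0 : in_set_nat S 0 = false.
  by apply/negbTE/existsP => [[x /andP[/S_pos + /eqP e]]]; rewrite e.
rewrite size_filter; transitivity (count (in_set_nat S) (iota 0 r)).
  by case: r S S_pos S0 => [|r] S _ S0 //=; rewrite S0.
have -> : iota 0 r = index_iota 0 r by rewrite /index_iota subn0.
rewrite -sum1_count big_mkord -sum1_card.
by apply: eq_bigl => x; rewrite in_set_natE.
Qed.

Lemma uniq_run0 r (S : {set 'I_r}) : 0 < r -> uniq (0 :: run S).
Proof. by move=> hr; apply: sorted_uniq; [exact: ltn_trans | exact: ltnn | exact: path_run]. Qed.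

Lemma mem_run0 r (S : {set 'I_r}) i : (i \in 0 :: run S) = lowered S i.
Proof. by rewrite inE mem_run /lowered; case: i. Qed.

Lemma count_mem_run r (S : {set 'I_r}) i : 0 < r -> count_mem i (0 :: run S) = lowered S i.
Proof. by move=> hr; rewrite count_uniq_mem ?uniq_run0 ?mem_run0. Qed.

Lemma final_run_set_pos r w : 0 \in w -> [forall i in final_run_set r w, 0 < val i].
Proof.
case/suffix0_shape => v hw hv; apply/forall_inP => x; rewrite inE hw /= lt0n => hx.
by apply: contraNneq hv => <-.
Qed.

Lemma final_run_set_cat r (S : {set 'I_r}) w' : [forall i in S, 0 < val i] ->
  final_run_set r (w' ++ 0 :: run S) = S.
Proof.
move=> /forall_inP S_pos; have h0 : 0 \notin run S by rewrite mem_run.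
apply/setP => x; rewrite inE; have [_ ->] := prefix0_suffix0_cat w' h0.
rewrite /= mem_run in_set_natE; case: (boolP (x \in S)) => hx; rewrite ?andbF ?andbT //.
exact: S_pos.
Qed.

Lemma extremal_suffix0 lam w : yamanouchi lam w -> 0 < nth 0 lam 0 ->
  word_des w = sumn lam - nth 0 lam 0 -> 0 \in w /\ sorted ltn (suffix0 w).
Proof.
case/yamanouchiP => hsz _ hc _ hl0 hd.
have h0w : 0 \in w by rewrite -has_pred1 has_count hc.
split=> //; case: w h0w hsz hc hd => [|x w] //= _ hsz /(_ 0) /= hc hd.
apply: sorted_suffix0; have := leq_asc_count0 x w; have := nth_le_sumn lam 0.
by move: hc; case: eqP => _ /=; lia.
Qed.

Section ExtremalWords.

Variables (lam : seq nat) (S : {set 'I_(size lam)}).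
Hypothesis lam_partition : is_partition lam.
Hypotheses (lam_pos : all (fun x => 0 < x) lam) (lam_nil : 0 < size lam).
Hypothesis S_pos : [forall i in S, 0 < val i].

Lemma lowered_lt i : lowered S i -> i < size lam.
Proof. by case/orP => [/eqP -> //|]; exact: in_set_nat_lt. Qed.

Lemma nth_lam_pos i : i < size lam -> 0 < nth 0 lam i.
Proof. by move: i; apply/all_nthP. Qed.

Lemma sumn_lower_lowered : sumn (lower lam (lowered S)) + #|S|.+1 = sumn lam.
Proof.
have := @sumn_lower lam (lowered S) (fun i hi _ => nth_lam_pos hi).
by rewrite -size_filter filter_lowered //= size_run.
Qed.

Lemma card_le_sumn_behead : #|S| <= sumn lam - nth 0 lam 0.
Proof.
rewrite -size_run //; case: lam lam_pos S => [|l0 lt] //= /andP[_ lt_pos] S'.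
rewrite addKn size_filter; apply: leq_trans (count_size _ _) _.
by rewrite size_iota; exact: size_le_sumn.
Qed.

Lemma word_des_cat_run w' : word_des (w' ++ 0 :: run S) = word_des w' + #|S|.
Proof. by rewrite word_des_cat_path ?path_run // size_run. Qed.

Lemma word_maj_cat_run w' : size w' = sumn (lower lam (lowered S)) ->
  word_maj (w' ++ 0 :: run S) = word_maj w' + (#|S| * sumn lam - 'C(#|S|.+1, 2)).
Proof.
move=> hs; rewrite word_maj_cat_path ?path_run // size_run // sum_consecutive.
by rewrite hs -sumn_lower_lowered addSn addnS.
Qed.

(* A letter [i.+1] of the run can only precede the letter [i] of the run if
   row [i] is not lowered while row [i.+1] is, and then lam_(i+1) <= lam_i. *)
Lemma lattice_cat_run w' k i :
  (forall i, count_mem i w' = nth 0 lam i - lowered S i) ->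
  (forall k i, i < size lam -> count_mem i.+1 (take k w') <= count_mem i (take k w')) ->
  i < size lam ->
  count_mem i.+1 (take k (w' ++ 0 :: run S)) <= count_mem i (take k (w' ++ 0 :: run S)).
Proof.
move=> hc' hb' hi; rewrite take_cat; case: ifP => hk; first exact: hb'.
rewrite !count_cat; set p := take (k - size w') (0 :: run S).
have up : uniq p by apply/take_uniq/uniq_run0.
have hfull := hb' (size w') i hi; rewrite take_size in hfull.
rewrite !(count_uniq_mem _ up).
have [hp1|_] := boolP (i.+1 \in p); last first.
  by rewrite /= addn0; exact: leq_trans hfull (leq_addr _ _).
have [hp0|hp0] := boolP (i \in p); first by rewrite leq_add2r.
have hT1 : lowered S i.+1 by rewrite -mem_run0; exact: mem_take hp1.
have hT0 : lowered S i = false.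
  apply/negP; rewrite -mem_run0 => h; move/negP: hp0; apply.
  by move: hp1; rewrite /p => /mem_take_sorted_ltn; apply=> //; exact: path_run.
rewrite !hc' hT1 hT0 /= subn0 !addn0 subnK; first exact: partition_nthS.
exact/nth_lam_pos/lowered_lt.
Qed.

Lemma yamanouchi_cat_run w' :
  yamanouchi lam (w' ++ 0 :: run S) = yamanouchi (lower lam (lowered S)) w'.
Proof.
have hcnt := count_mem_run S _ lam_nil.
apply/yamanouchiP/yamanouchiP; rewrite size_lower => -[hsz hall hc hb]; split.
- apply/eqP; rewrite -(eqn_add2r #|S|.+1) sumn_lower_lowered -hsz size_cat /= size_run //.
- by move=> x hx; apply: hall; rewrite mem_cat hx.
- by move=> i; rewrite nth_lower -hc count_cat hcnt addnK.
- by move=> k i hi; rewrite (take_cat_minn w' (0 :: run S) k); exact: hb.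
- by rewrite size_cat /= size_run // hsz sumn_lower_lowered.
- by move=> x; rewrite mem_cat mem_run0 => /orP[/hall|/lowered_lt].
- move=> i; rewrite count_cat hc hcnt nth_lower.
  case: (boolP (lowered S i)) => h /=; rewrite ?subn0 ?addn0 // subnK //.
  exact/nth_lam_pos/lowered_lt.
- by move=> k i hi; apply: lattice_cat_run => // j; rewrite hc nth_lower.
Qed.

Lemma extremal_cat_run w : yamanouchi lam w -> word_des w = sumn lam - nth 0 lam 0 ->
  final_run_set (size lam) w = S -> w = prefix0 w ++ 0 :: run S.
Proof.
move=> hy hd hS; have [h0w hsrt] := extremal_suffix0 hy (nth_lam_pos lam_nil) hd.
case/yamanouchiP: hy => _ hall _ _.
case: (suffix0_shape h0w) => v hsf hv; rewrite -{1}(cat_prefix0_suffix0 w) hsf.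
congr (_ ++ 0 :: _); apply: (irr_sorted_eq ltn_trans ltnn).
- by move: hsrt; rewrite hsf => /path_sorted.
- exact/path_sorted/path_run.
move=> i; rewrite mem_run; apply/idP/idP => [hi|/andP[_ /existsP[x /andP[+ /eqP <-]]]].
  have hir : i < size lam by apply: hall; rewrite -(cat_prefix0_suffix0 w) hsf mem_cat inE hi !orbT.
  have hi0 : 0 < i by rewrite lt0n; apply: contraNneq hv => <-.
  by rewrite hi0; apply/existsP; exists (Ordinal hir); rewrite -hS inE hsf hi eqxx.
by rewrite -hS inE hsf.
Qed.

Lemma sum_extremal_run :
  (\sum_(w <- words (size lam) (sumn lam) |
          (yamanouchi lam w && (word_des w == sumn lam - nth 0 lam 0)%N)
          && (final_run_set (size lam) w == S)) 'X^(word_maj w)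
   = 'X^(#|S| * sumn lam - 'C(#|S|.+1, 2)) *
     word_fpoly (lower lam (lowered S)) (sumn lam - nth 0 lam 0 - #|S|)%N)%R.
Proof.
have h0 : 0 \notin run S by rewrite mem_run.
rewrite /word_fpoly size_lower mulr_sumr -[LHS]big_filter -[RHS]big_filter.
set L' := [seq _ <- words _ (sumn (lower _ _)) | _].
have -> : (\sum_(w' <- L') ('X^(#|S| * sumn lam - 'C(#|S|.+1, 2)) : {poly int}) * 'X^(word_maj w') =
           \sum_(w <- [seq w' ++ 0%N :: run S | w' <- L']) 'X^(word_maj w))%R.
  rewrite big_map; apply: eq_big_seq => w'; rewrite mem_filter mem_words => /and3P[_ /eqP hs' _].
  by rewrite word_maj_cat_run // exprD mulrC.
apply: perm_big; apply: uniq_perm.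
- exact/filter_uniq/uniq_words.
- rewrite map_inj_uniq; first exact/filter_uniq/uniq_words.
  exact: can_inj (fun w' => (prefix0_suffix0_cat w' h0).1).
move=> w; rewrite mem_filter andbC; apply/idP/mapP.
- case/andP=> _ /andP[/andP[hy /eqP hd] /eqP hS].
  have ew := extremal_cat_run hy hd hS.
  exists (prefix0 w) => //; rewrite ew yamanouchi_cat_run // word_des_cat_run // in hy hd.
  rewrite mem_filter hy -hd addnK eqxx /=.
  by have := mem_words_yamanouchi hy; rewrite size_lower.
- case=> w' + ->; rewrite mem_filter => /andP[/andP[hy' /eqP hd'] _].
  rewrite -yamanouchi_cat_run in hy'.
  rewrite mem_words_yamanouchi // hy' word_des_cat_run // hd' subnK ?card_le_sumn_behead //.
  by rewrite final_run_set_cat // !eqxx.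
Qed.

End ExtremalWords.

Theorem mainTheorem10 (lam : seq nat) :
  is_partition lam -> all (fun x => 0 < x) lam ->
  let n := sumn lam in
  let r := size lam in
  fpoly lam (n - nth 0 lam 0) =
  (\sum_(S : {set 'I_r} | [forall i in S, (0 < val i)%N])
     'X^(#|S| * n - 'C(#|S|.+1, 2)) *
     fpoly (lower lam (fun i => (i == 0)%N || [exists x in S, val x == i]))
           (n - nth 0 lam 0 - #|S|)%N)%R.
Proof.
move=> hp hpos n r; rewrite {}/n {}/r.
case: (posnP (size lam)) => [/size0nil-> | lam_nil].
  rewrite (big_pred1 set0) => [|S]; first by rewrite cards0 mul0n expr0 mul1r.
  have -> : S = set0 by apply/setP => [[]].
  by rewrite /= eqxx; apply/forall_inP => [[]].
rewrite fpoly_word /word_fpoly.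
rewrite (partition_big (final_run_set (size lam)) (fun S => [forall i in S, 0 < val i])).
  by apply: eq_bigr => S S_pos; rewrite sum_extremal_run // fpoly_word.
move=> w /andP[hy /eqP hd]; apply: final_run_set_pos.
exact: (extremal_suffix0 hy (nth_lam_pos hpos lam_nil) hd).1.
Qed.
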